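(* Let $G=(V,E)$ be a finite graph and let $\xi$ be an integer-valued random variable such that the random permutation has cycle length bounded by $\xi$ on $(V,E)$. Let $(\xi_n)_{n\in\mathbb N}$ be independent copies of $\xi$. Then for each $A \subset V$ and each $\ell \in \mathbb N$, $$\mathbb P_V(|\mathrm{Or}(A)| \geq \ell) \leq \mathbb P\Big(\sum_{i=1}^{|A|} \xi_i \geq \ell\Big).$$
   Context: For $U\subset V$, $\mathcal S_U$ is the set of bijections $\pi:U\to U$ with $\pi(x)=x$ or $\{x,\pi(x)\}\in E$; $\mathbb P_U(\pi)=e^{-\alpha\sum_{x\in U}\mathbb 1\{\pi(x)\neq x\}}/Z(U)$. $\gamma_x$ is the cycle of $\pi$ containing $x$ and $|\gamma_x|$ its number of vertices. The random permutation has cycle length bounded by $\xi$ on $(V,E)$ if for all $\ell\ge1$, $\sup_{U\subset V\text{ finite}}\sup_{x\in U}\mathbb P_U(|\gamma_x|\ge\ell)\le\mathbb P(\xi\ge\ell)$. $\mathrm{Or}(A)=\mathrm{Or}_\pi(A)=\{\pi^j(x):x\in A,j\in\mathbb N\}$. *)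

From HB Require Import structures.
From mathcomp Require Import all_boot all_order all_algebra all_fingroup.
From mathcomp Require Import all_classical all_reals all_analysis.
Set Implicit Arguments. Unset Strict Implicit. Unset Printing Implicit Defensive.
Import Order.TTheory GRing.Theory Num.Theory.
Local Open Scope classical_set_scope.
Local Open Scope ring_scope.

Section RandomPermutation.
Variables (R : realType) (V : finType) (E : rel V) (alpha : R).

(* S_U : bijections of U (= permutations of V supported in U) moving every
   vertex either nowhere or to a neighbour. *)
Definition graph_perm (U : {set V}) (s : {perm V}) : bool :=
  perm_on U s && [forall x, (s x == x) || E x (s x)].

Definition perm_weight (U : {set V}) (s : {perm V}) : R :=
  expR (- alpha * (#|[set x in U | s x != x]|)%:R).

Definition partition_fn (U : {set V}) : R :=
  \sum_(s | graph_perm U s) perm_weight U s.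

Definition PU (U : {set V}) (Ev : pred {perm V}) : R :=
  (\sum_(s | graph_perm U s && Ev s) perm_weight U s) / partition_fn U.

Definition cycle_len (s : {perm V}) (x : V) : nat := #|porbit s x|.

Definition Or (s : {perm V}) (A : {set V}) : {set V} :=
  \bigcup_(x in A) porbit s x.
End RandomPermutation.

Definition cycle_length_bounded_by (R : realType) (V : finType) (E : rel V)
    (alpha : R) (d : measure_display) (T : measurableType d)
    (P : probability T R) (xi : T -> R) : Prop :=
  forall l : nat, (1 <= l)%N ->
  forall (U : {set V}) (x : V), x \in U ->
    ((PU E alpha U (fun s => l <= cycle_len s x)%N)%:E
       <= P [set t | (l%:R <= xi t)%R])%E.

Definition mutually_independent (R : realType) (d : measure_display)
    (T : measurableType d) (P : probability T R) (X : nat -> T -> R) : Prop :=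
  forall (I : seq nat) (B : nat -> set R), uniq I ->
    (forall i, measurable (B i)) ->
    P (\big[setI/setT]_(i <- I) (X i @^-1` B i))
      = (\big[*%E/1%E]_(i <- I) P (X i @^-1` B i))%E.

Definition same_distribution (R : realType) (d d' : measure_display)
    (T : measurableType d) (T' : measurableType d')
    (P : probability T R) (X : T -> R) (P' : probability T' R) (Y : T' -> R)
    : Prop :=
  forall B : set R, measurable B -> P (X @^-1` B) = P' (Y @^-1` B).

(* Fix a vertex x of A and condition on the cycle C of x. The Gibbs weight of
   a permutation of U whose cycle through x is C factors as the weight of that
   cycle times the weight of a permutation of U \ C, and Or(A) is then the
   disjoint union of C and the orbit of A \ C under the latter. So, given C,
   |Or(A)| - |C| is distributed like |Or(A \ C)| under P_{U \ C}, which by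
   induction on |A| is dominated by a sum of |A| - 1 independent copies of ξ.
   As |C| = |γ_x| is itself dominated by ξ, Abel summation against the
   nondecreasing function j ↦ P(ξ_1 + ... + ξ_{|A|-1} ≥ ℓ - j) closes the
   induction. Truncating ξ at ℓ + 1 keeps all these expectations finite sums. *)

From HB Require Import structures.
From mathcomp Require Import all_boot all_order all_algebra all_fingroup.
From mathcomp Require Import all_classical all_reals all_analysis.
From mathcomp Require Import measurable_realfun ring zify.
Import Order.TTheory GRing.Theory Num.Theory.
Local Open Scope classical_set_scope.
Local Open Scope ring_scope.
Set Implicit Arguments. Unset Strict Implicit. Unset Printing Implicit Defensive.

Section PermutationOrbits.
Variable T : finType.
Implicit Types (s t r : {perm T}) (C D : {set T}).

Lemma restr_perm_if D s y : s \in 'N(D | 'P)%g ->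
  restr_perm D s y = if y \in D then s y else y.
Proof.
move=> sN; case: ifPn => yD; first exact: restr_permE.
exact: out_perm (restr_perm_on D s) yD.
Qed.

Lemma permM_if C t r y : perm_on C t -> perm_on (~: C) r ->
  (t * r)%g y = if y \in C then t y else r y.
Proof.
move=> tC rC; rewrite permM; case: ifPn => yC.
  by rewrite (out_perm rC) // inE negbK perm_closed.
by rewrite (out_perm tC).
Qed.

Lemma porbit_astabs s x : s \in 'N(porbit s x | 'P)%g.
Proof.
apply/astabsP => y /=; have := porbit_perm s 1 y; rewrite expg1 => syE.
by rewrite porbit_sym -eq_porbit_mem syE eq_porbit_mem porbit_sym.
Qed.

Lemma porbit_subset s D a : {in D, forall y, s y \in D} -> a \in D ->
  porbit s a \subset D.
Proof.
move=> sD aD; apply/fintype.subsetP => _ /porbitP [i ->].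
elim: i => [|i IH]; first by rewrite expg0 perm1.
by rewrite expgSr permM sD.
Qed.

Lemma eq_porbit_on D s r a : perm_on D r -> {in D, s =1 r} -> a \in D ->
  porbit s a = porbit r a.
Proof.
move=> rD srD aD.
have rDD : {in D, forall y, r y \in D} by move=> y; rewrite perm_closed.
have iterE i : (s ^+ i)%g a = (r ^+ i)%g a.
  elim: i => [|i IH]; first by rewrite !expg0 !perm1.
  rewrite !expgSr !permM IH srD //.
  exact: fintype.subsetP (porbit_subset rDD aD) _ (mem_porbit r i a).
by apply/setP => y; apply/porbitP/porbitP => -[i ->]; exists i.
Qed.

End PermutationOrbits.

Section ConvolutionTail.
Variables (R : numDomainType) (q : nat -> R) (L : nat).
Hypothesis q_ge0 : forall k, 0 <= q k.

(* [conv_tail n m] is P(Y_1 + ... + Y_n >= m) for independent Y_i with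
   P(Y_i = k.+1) = q k.+1 for k < L, and [tail_mass j] is P(Y_1 > j). *)
Fixpoint conv_tail (n m : nat) : R :=
  if n is n'.+1 then \sum_(k < L) q k.+1 * conv_tail n' (m - k.+1)%N
  else (m == 0)%:R.

Definition tail_mass (j : nat) : R := \sum_(k < L | (j <= k)%N) q k.+1.

Lemma conv_tail_ge0 n m : 0 <= conv_tail n m.
Proof.
elim: n m => [|n IH] m /=; first by rewrite ler0n.
by apply: sumr_ge0 => k _; rewrite mulr_ge0.
Qed.

Lemma conv_tail_nonincreasing n :
  {homo conv_tail n : m1 m2 / (m1 <= m2)%N >-> m2 <= m1}.
Proof.
elim: n => [|n IH] m1 m2 m12 /=.
  by case: m2 m12 => [|m2]; [rewrite leqn0 => /eqP ->|rewrite ler0n].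
by apply: ler_sum => k _; rewrite ler_wpM2l // IH // leq_sub2r.
Qed.

Lemma conv_tail_leS n m : 1 <= tail_mass 0 -> conv_tail n m <= conv_tail n.+1 m.
Proof.
move=> mass1; elim: n m => [|n IH] m /=.
  case: m => [|m]; last by apply: sumr_ge0 => k _; rewrite mulr_ge0 ?ler0n.
  by apply: le_trans mass1 _; apply: ler_sum => k _; rewrite sub0n mulr1.
by apply: ler_sum => k _; rewrite ler_wpM2l.
Qed.

Lemma conv_tail_nondecreasing m : 1 <= tail_mass 0 ->
  {homo conv_tail^~ m : n1 n2 / (n1 <= n2)%N >-> n1 <= n2}.
Proof.
by move=> mass1; apply: Order.NatMonotonyTheory.nondecnP => n; exact: conv_tail_leS.
Qed.

(* Abel summation: both sides equal [g 0] times the total mass plus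
   [\sum_j (g j.+1 - g j)] times the mass beyond [j]. *)
Lemma stochastic_domination (I : finType) (pi : I -> R) (c : I -> nat)
    (g : nat -> R) :
  (forall i, 0 <= pi i) -> \sum_i pi i = 1 ->
  (forall j, (j < L)%N -> \sum_(i | (j < c i)%N) pi i <= tail_mass j) ->
  {homo g : j k / (j <= k)%N >-> j <= k} ->
  (forall k, (L <= k)%N -> g k = g L) ->
  0 <= g 0 -> 1 <= tail_mass 0 ->
  \sum_i pi i * g (c i) <= \sum_(k < L) q k.+1 * g k.+1.
Proof.
move=> pi_ge0 pi1 pi_tail g_homo gL g0_ge0 mass1.
pose d j := g j.+1 - g j.
have gE k : g k = g 0 + \sum_(j < L | (j < k)%N) d j.
  have [kL|/ltnW kL] := leqP L k.
    rewrite (eq_bigl (fun _ => true)) => [|j]; last exact: leq_trans (ltn_ord j) kL.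
    by rewrite -(big_mkord xpredT d) telescope_sumr // gL // addrC subrK.
  rewrite -(big_ord_widen _ d kL) -(big_mkord xpredT d).
  by rewrite telescope_sumr // addrC subrK.
have lhsE : \sum_i pi i * g (c i) =
    g 0 + \sum_(j < L) d j * \sum_(i | (j < c i)%N) pi i.
  under eq_bigr do rewrite gE mulrDr big_distrr.
  rewrite big_split /= -mulr_suml pi1 mul1r; congr (_ + _).
  rewrite (exchange_big_dep predT) //=; apply: eq_bigr => j _.
  by rewrite mulr_sumr; apply: eq_bigr => i _; rewrite mulrC.
have rhsE : \sum_(k < L) q k.+1 * g k.+1 =
    tail_mass 0 * g 0 + \sum_(j < L) d j * tail_mass j.
  under eq_bigr do rewrite gE mulrDr big_distrr.
  rewrite big_split /= -mulr_suml; congr (_ + _).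
  rewrite (exchange_big_dep predT) //=; apply: eq_bigr => j _.
  by rewrite mulr_sumr; apply: eq_bigr => k _; rewrite mulrC.
rewrite lhsE rhsE lerD ?ler_peMl //; apply: ler_sum => j _.
by rewrite ler_wpM2l ?pi_tail // subr_ge0 g_homo.
Qed.

End ConvolutionTail.

Section GibbsPermutation.
Variables (R : realType) (V : finType) (E : rel V) (alpha : R).
Implicit Types (U C A : {set V}) (s t r : {perm V}) (e : pred {perm V}).

Local Notation graph_perm := (graph_perm E).
Local Notation perm_weight := (@perm_weight R V alpha).
Local Notation partition_fn := (@partition_fn R V E alpha).
Local Notation PU := (@PU R V E alpha).

Lemma perm_weight_gt0 U s : 0 < perm_weight U s.
Proof. exact: expR_gt0. Qed.

Lemma graph_perm1 U : graph_perm U 1.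
Proof. by rewrite /graph_perm perm_on1; apply/forallP => y; rewrite perm1 eqxx. Qed.

Lemma partition_fn_gt0 U : 0 < partition_fn U.
Proof.
rewrite /partition_fn (bigD1 1%g) ?graph_perm1 //=.
rewrite ltr_wpDr ?perm_weight_gt0 //.
by apply: sumr_ge0 => s _; exact/ltW/perm_weight_gt0.
Qed.

Lemma eq_PU U e1 e2 : e1 =1 e2 -> PU U e1 = PU U e2.
Proof. by move=> e12; congr (_ / _); apply: eq_bigl => s; rewrite e12. Qed.

Lemma PU_ge0 U e : 0 <= PU U e.
Proof.
rewrite divr_ge0 ?(ltW (partition_fn_gt0 U)) //.
by apply: sumr_ge0 => s _; exact/ltW/perm_weight_gt0.
Qed.

Lemma PU_pred0 U e : {in graph_perm U, forall s, ~~ e s} -> PU U e = 0.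
Proof.
move=> eF; rewrite /PU big_pred0 ?mul0r // => s.
by apply/negbTE/nandP; case: (boolP (graph_perm U s)) => [/eF|]; [right|left].
Qed.

Lemma PU_predT U e : {in graph_perm U, forall s, e s} -> PU U e = 1.
Proof.
move=> eT; rewrite /PU (eq_bigl (graph_perm U)) ?divff ?gt_eqF ?partition_fn_gt0 //.
by move=> s; case: (boolP (graph_perm U s)) => // /eT ->.
Qed.

Lemma PU_porbit_partition x U (P : pred {set V}) e :
  \sum_(C | P C) PU U (fun s => (porbit s x == C) && e s) =
  PU U (fun s => P (porbit s x) && e s).
Proof.
rewrite -mulr_suml; congr (_ / _).
rewrite (partition_big (fun s => porbit s x) P) => [|s /andP[_ /andP[]]] //=.
apply: eq_bigr => C PC; apply: eq_bigl => s.
by case: eqP => [->|_]; rewrite ?PC ?andbT ?andbF.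
Qed.

Lemma sum_PU_porbit x U (P : pred {set V}) :
  \sum_(C | P C) PU U (fun s => porbit s x == C) = PU U (fun s => P (porbit s x)).
Proof.
transitivity (PU U (fun s => P (porbit s x) && true)).
  rewrite -PU_porbit_partition; apply: eq_bigr => C _.
  by apply: eq_PU => s; rewrite andbT.
by apply: eq_PU => s; rewrite andbT.
Qed.

Lemma PU_porbit_out x U C e : x \in U -> ~~ ((x \in C) && (C \subset U)) ->
  PU U (fun s => (porbit s x == C) && e s) = 0.
Proof.
move=> xU notC; apply: PU_pred0 => s /andP[sU _].
apply: contraNN notC => /andP[/eqP <- _].
by rewrite porbit_id porbit_subset // => y yU; rewrite perm_closed.
Qed.

Section CycleSplit.
Variables (U C : {set V}) (x : V).
Hypotheses (CU : C \subset U) (xC : x \in C).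

Lemma perm_on_setDC t : perm_on (U :\: C) t -> perm_on (~: C) t.
Proof. by move=> tUC; apply: fintype.subset_trans tUC (subsetDr _ _). Qed.

Lemma graph_perm_mul t r :
  graph_perm C t -> porbit t x = C -> graph_perm (U :\: C) r ->
  [/\ graph_perm U (t * r)%g, porbit (t * r)%g x = C,
      restr_perm C (t * r)%g = t & restr_perm (~: C) (t * r)%g = r].
Proof.
case/andP => tC /forallP tE tx; case/andP => rUC /forallP rE.
have rC := perm_on_setDC rUC.
have trE := permM_if _ tC rC.
have trx : porbit (t * r)%g x = C.
  by rewrite -[RHS]tx; apply: (eq_porbit_on tC) => // y yC; rewrite trE yC.
have trN : ((t * r)%g \in 'N(C | 'P))%g by rewrite -{1}trx porbit_astabs.
split => //.
- have trU : perm_on U (t * r)%g.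
    apply: perm_onM; first exact: fintype.subset_trans tC CU.
    exact: fintype.subset_trans rUC (subsetDl _ _).
  by rewrite /graph_perm trU; apply/forallP => y; rewrite trE; case: ifP.
- apply/permP => y; rewrite restr_perm_if // trE.
  by case: (boolP (y \in C)) => // yC; rewrite (out_perm tC yC).
- apply/permP => y; rewrite restr_perm_if ?astabsC // trE inE.
  by case: (boolP (y \in C)) => //= yC; rewrite (out_perm rC) // inE yC.
Qed.

Lemma graph_perm_restr s : graph_perm U s -> porbit s x = C ->
  [/\ graph_perm C (restr_perm C s), porbit (restr_perm C s) x = C,
      graph_perm (U :\: C) (restr_perm (~: C) s) &
      (restr_perm C s * restr_perm (~: C) s)%g = s].
Proof.
case/andP => sU /forallP sE sx.
have sN : (s \in 'N(C | 'P))%g by rewrite -sx porbit_astabs.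
have sNC : (s \in 'N(~: C | 'P))%g by rewrite astabsC.
have tE := restr_perm_if _ sN; have rE := restr_perm_if _ sNC.
split.
- rewrite /graph_perm restr_perm_on /=; apply/forallP => y.
  by rewrite tE; case: ifP; rewrite ?eqxx.
- rewrite -[RHS]sx; apply/esym/(eq_porbit_on (restr_perm_on _ _)) => // y yC.
  by rewrite tE yC.
- rewrite /graph_perm; apply/andP; split; last first.
    by apply/forallP => y; rewrite rE; case: ifP; rewrite ?eqxx.
  apply/fintype.subsetP => y; rewrite !inE rE inE.
  by case: (y \in C); rewrite ?eqxx //= => /(fintype.subsetP sU).
- apply/permP => y; rewrite (permM_if _ (restr_perm_on _ _) (restr_perm_on _ _)).
  by rewrite tE rE inE; case: (y \in C).
Qed.

Lemma sum_graph_perm_cycle (F : {perm V} -> R) :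
  \sum_(s | graph_perm U s && (porbit s x == C)) F s =
  \sum_(t | graph_perm C t && (porbit t x == C))
    \sum_(r | graph_perm (U :\: C) r) F (t * r)%g.
Proof.
rewrite pair_big_dep /=.
rewrite (reindex_onto (fun p : {perm V} * {perm V} => (p.1 * p.2)%g)
          (fun s => (restr_perm C s, restr_perm (~: C) s))) /=; last first.
  by move=> s /andP[sU /eqP sx]; case: (graph_perm_restr sU sx).
apply: eq_bigl => -[t r] /=; apply/idP/idP.
  case/andP => /andP[sU /eqP sx] /eqP [tE rE].
  by case: (graph_perm_restr sU sx); rewrite tE rE => -> -> -> _; rewrite eqxx.
case/andP => /andP[tC /eqP tx] rUC.
by case: (graph_perm_mul tC tx rUC) => -> -> -> ->; rewrite !eqxx.
Qed.

Lemma perm_weightM t r : perm_on C t -> perm_on (U :\: C) r ->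
  perm_weight U (t * r)%g = perm_weight C t * perm_weight (U :\: C) r.
Proof.
move=> tC rUC; have trE := permM_if _ tC (perm_on_setDC rUC).
rewrite /perm_weight -expRD -mulrDr -natrD; congr (expR (_ * _%:R)).
rewrite -(cardsID C [set y in U | (t * r)%g y != y]); congr (_ + _).
  apply: eq_card => y; rewrite !inE trE.
  by case: ifP; rewrite ?andbT ?andbF // => /(fintype.subsetP CU) ->.
by apply: eq_card => y; rewrite !inE trE; case: ifP; rewrite ?andbF ?andbT // andbC.
Qed.

Lemma card_OrM A t r : x \in A ->
  graph_perm C t -> porbit t x = C -> graph_perm (U :\: C) r ->
  #|Or (t * r)%g A| = #|C| + #|Or r (A :\: C)|.
Proof.
move=> xA tC tx rUC; case: (graph_perm_mul tC tx rUC) => _ trx _ _.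
move: tC rUC => /andP[tC _] /andP[/perm_on_setDC rC _].
have trE := permM_if _ tC rC.
have rCC : {in ~: C, forall y, r y \in ~: C} by move=> y; rewrite perm_closed.
have trOr a : a \notin C -> porbit (t * r)%g a = porbit r a.
  move=> aC; apply: (eq_porbit_on rC); last by rewrite inE.
  by move=> y; rewrite inE trE => /negbTE ->.
have -> : Or (t * r)%g A = C :|: Or r (A :\: C).
  apply/setP => y; rewrite inE; apply/bigcupP/orP => [[a aA ya]|].
    case: (boolP (a \in C)) => aC.
      have /eqP axE : porbit (t * r)%g a == porbit (t * r)%g x.
        by rewrite eq_porbit_mem trx.
      by left; rewrite -trx -axE.
    by right; apply/bigcupP; exists a; [rewrite inE aC aA | rewrite -trOr].
  case=> [yC|/bigcupP [a]]; first by exists x; rewrite ?trx.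
  by rewrite inE => /andP[aC aA] ya; exists a; rewrite ?trOr.
rewrite cardsU; suff -> : C :&: Or r (A :\: C) = finset.set0 by rewrite cards0 subn0.
apply/setP => y; rewrite !inE; apply/negbTE/andP => -[yC /bigcupP [a]].
rewrite inE => /andP[aC _]; have aC' : a \in ~: C by rewrite inE.
by move/(fintype.subsetP (porbit_subset rCC aC')); rewrite inE yC.
Qed.

Lemma PU_cycle_Or A m : x \in A ->
  PU U (fun s => (porbit s x == C) && (m <= #|Or s A|)%N) =
  PU U (fun s => porbit s x == C) *
  PU (U :\: C) (fun r => m - #|C| <= #|Or r (A :\: C)|)%N.
Proof.
move=> xA.
set wC := \sum_(t | graph_perm C t && (porbit t x == C)) perm_weight C t.
have sum_cycle (f h : pred {perm V}) :
    (forall t r, graph_perm C t -> porbit t x = C -> graph_perm (U :\: C) r ->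
       f (t * r)%g = h r) ->
    \sum_(s | graph_perm U s && ((porbit s x == C) && f s)) perm_weight U s =
    wC * \sum_(r | graph_perm (U :\: C) r && h r) perm_weight (U :\: C) r.
  move=> fh; under eq_bigl do rewrite andbA.
  rewrite big_mkcondr sum_graph_perm_cycle mulr_suml.
  apply: eq_bigr => t /andP[tC /eqP tx]; rewrite mulr_sumr [RHS]big_mkcondr.
  apply: eq_bigr => r rUC; rewrite (fh t r tC tx rUC).
  case: (h r); rewrite ?mulr0 // perm_weightM //.
    by case/andP: tC.
  by case/andP: rUC.
have cycleE : \sum_(s | graph_perm U s && (porbit s x == C)) perm_weight U s =
    wC * partition_fn (U :\: C).
  rewrite /partition_fn -(eq_bigl _ _ (fun r => andbT (graph_perm (U :\: C) r))).
  rewrite -(sum_cycle (fun _ => true)) //.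
  by apply: eq_bigl => s; rewrite andbT.
rewrite /PU cycleE (sum_cycle _ (fun r => m - #|C| <= #|Or r (A :\: C)|)%N).
  by field; rewrite !gt_eqF ?partition_fn_gt0.
by move=> t r tC tx rUC; rewrite (card_OrM xA tC tx rUC) leq_subLR.
Qed.

End CycleSplit.

Section OrbitDomination.
Variables (q : nat -> R) (L : nat).
Hypotheses (q_ge0 : forall k, 0 <= q k) (L_gt0 : (0 < L)%N).
Hypothesis cycle_tail : forall j U x, (j < L)%N -> x \in U ->
  PU U (fun s => j < #|porbit s x|)%N <= tail_mass q L j.

Lemma tail_mass0_ge1 U x : x \in U -> 1 <= tail_mass q L 0.
Proof.
move=> xU; rewrite -(PU_predT (U := U) (e := fun s => 0 < #|porbit s x|)%N).
  exact: cycle_tail.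
by move=> s _; rewrite lt0n card_porbit_neq0.
Qed.

Lemma PU_card_Or_le U A m : A \subset U -> (m <= L)%N ->
  PU U (fun s => m <= #|Or s A|)%N <= conv_tail q L #|A| m.
Proof.
have [n] := ubnP #|A|; elim: n => // n IH in U A m *; rewrite ltnS => An AU mL.
have [A0|[x xA]] := set_0Vmem A.
  rewrite A0 cards0 /=; under eq_PU do rewrite /Or big_set0 cards0 leqn0.
  by case: eqP => _; [rewrite PU_predT|rewrite PU_pred0].
have xU := fintype.subsetP AU x xA.
pose pi C := PU U (fun s => porbit s x == C).
have cycle_step C : PU U (fun s => (porbit s x == C) && (m <= #|Or s A|)%N) <=
    pi C * conv_tail q L #|A|.-1 (m - #|C|).
  have [/andP[xC CU]|notC] := boolP ((x \in C) && (C \subset U)); last first.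
    rewrite PU_porbit_out //.
    by apply: mulr_ge0; [exact: PU_ge0|exact: conv_tail_ge0].
  have ACA : (#|A :\: C| < #|A|)%N.
    apply: proper_card; rewrite properE subsetDl /=.
    by apply/fintype.subsetPn; exists x; rewrite // inE xC.
  rewrite PU_cycle_Or // ler_wpM2l ?PU_ge0 //.
  apply: le_trans (IH _ _ _ (leq_trans ACA An) _ _) _.
  - exact: finset.setSD.
  - exact: leq_trans (leq_subr _ _) mL.
  apply: (conv_tail_nondecreasing q_ge0 _ (tail_mass0_ge1 xU)).
  by rewrite -ltnS (ltn_predK ACA).
have -> : PU U (fun s => m <= #|Or s A|)%N =
    \sum_C PU U (fun s => (porbit s x == C) && (m <= #|Or s A|)%N).
  by rewrite PU_porbit_partition.
have A_gt0 : (0 < #|A|)%N by apply/card_gt0P; exists x.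
rewrite -(prednK A_gt0); apply: le_trans (ler_sum _ (fun C _ => cycle_step C)) _.
apply: (stochastic_domination (pi := pi) (c := fun C => #|C|)
          (g := fun j => conv_tail q L #|A|.-1 (m - j))) => //.
- by move=> C; exact: PU_ge0.
- by rewrite sum_PU_porbit PU_predT.
- by move=> j jL; rewrite sum_PU_porbit cycle_tail.
- by move=> j k jk; apply: (conv_tail_nonincreasing _ q_ge0); exact: leq_sub2l.
- by move=> k Lk; congr conv_tail; lia.
- exact: conv_tail_ge0.
- exact: tail_mass0_ge1 xU.
Qed.

End OrbitDomination.
End GibbsPermutation.

Section Measurability.
Context d (T : measurableType d) (R : realType).

Lemma measurable_preimageT (f : T -> R) (B : set R) :
  measurable_fun setT f -> measurable B -> measurable (f @^-1` B).
Proof. by move=> mf mB; rewrite -[_ @^-1` _]setTI; exact: mf. Qed.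

Lemma measurable_set_ge (a : R) : measurable [set r : R | a <= r].
Proof.
rewrite (_ : [set r | a <= r] = [set` `[a, +oo[%R]); first exact: measurable_itv.
by apply/seteqP; split => r /=; rewrite in_itv /= andbT.
Qed.

End Measurability.

Section RealProbability.
Context d (T : measurableType d) (R : realType) (P : probability T R).

Definition pr (A : set T) : R := fine (P A).

Lemma prE A : measurable A -> P A = (pr A)%:E.
Proof. by move=> mA; rewrite fineK ?fin_num_measure. Qed.

Lemma pr_ge0 A : 0 <= pr A.
Proof. by rewrite fine_ge0 ?measure_ge0. Qed.

Lemma le_pr A B : measurable A -> measurable B -> A `<=` B -> pr A <= pr B.
Proof.
move=> mA mB AB; rewrite -lee_fin -(prE mA) -(prE mB).
exact: le_measure (mem_set mA) (mem_set mB) AB.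
Qed.

Lemma pr_bigsetU n (Q : {pred 'I_n}) (F : 'I_n -> set T) :
  (forall i, Q i -> measurable (F i)) -> trivIset Q F ->
  pr (\big[setU/set0]_(i < n | Q i) F i) = \sum_(i < n | Q i) pr (F i).
Proof.
move=> mF tF; rewrite /pr measure_bigsetU_ord_cond // sum_fine // => i Qi.
exact: fin_num_measure (mF i Qi).
Qed.

End RealProbability.

Section Truncation.
Variables (R : realType) (L : nat).

Definition trunc_level (k : nat) : set R := [set r | Num.min r L%:R = k%:R].

Lemma measurable_trunc_level k : measurable (trunc_level k).
Proof.
apply: (measurable_preimageT (f := fun r : R => Num.min r L%:R)) (measurable_set1 _).
by apply: measurable_minr; [exact: measurable_id|exact: measurable_cst].
Qed.

Lemma trunc_level_ge k r : trunc_level k r -> k%:R <= r.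
Proof. by rewrite /trunc_level /= => <-; rewrite ge_min lexx. Qed.

Lemma trunc_level_inj k k' r : trunc_level k r -> trunc_level k' r -> k = k'.
Proof. by rewrite /trunc_level /= => -> /eqP; rewrite eqr_nat => /eqP. Qed.

Lemma trunc_level_nat n : trunc_level (minn n L) n%:R.
Proof. by rewrite /trunc_level /= -natr_min. Qed.

End Truncation.

Section TruncatedLaw.
Context d0 (T0 : measurableType d0) (R : realType) (P0 : probability T0 R).
Variables (xi : T0 -> R) (L : nat).
Hypotheses (mxi : measurable_fun setT xi) (xi_int : forall t, xi t \is a Num.int).

Definition trunc_law (k : nat) : R := pr P0 (xi @^-1` trunc_level L k).

Lemma trunc_law_ge0 k : 0 <= trunc_law k.
Proof. exact: pr_ge0. Qed.

Lemma pr_ge_le_tail_mass j : (j < L)%N ->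
  pr P0 [set t | j.+1%:R <= xi t] <= tail_mass trunc_law L j.
Proof.
move=> jL; have mlevel k : measurable (xi @^-1` trunc_level L k).
  exact: measurable_preimageT mxi (measurable_trunc_level _ _).
rewrite /tail_mass /trunc_law -pr_bigsetU; last 2 first.
- by move=> k _; exact: mlevel.
- move=> k k' _ _ [t [tk tk']]; apply/val_inj/succn_inj.
  exact: trunc_level_inj tk tk'.
apply: le_pr; first exact: measurable_preimageT mxi (measurable_set_ge _).
  by apply: bigsetU_measurable => k _; exact: mlevel.
move=> t /= jxi; have /natrP [n xin] : xi t \is a Num.nat.
  by rewrite natrEint xi_int (le_trans _ jxi).
rewrite xin ler_nat in jxi.
have n_gt0 : (0 < minn n L)%N by rewrite leq_min (leq_trans _ jxi) ?(leq_trans _ jL).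
have kL : ((minn n L).-1 < L)%N by rewrite prednK // geq_minr.
rewrite (bigD1 (Ordinal kL)) /=; last by rewrite -ltnS prednK // leq_min jxi.
by left; rewrite /preimage /= prednK // xin; exact: trunc_level_nat.
Qed.

Lemma cycle_tail_le (V : finType) (E : rel V) (alpha : R) :
  cycle_length_bounded_by E alpha P0 xi ->
  forall j (U : {set V}) x, (j < L)%N -> x \in U ->
  PU E alpha U (fun s => j < #|porbit s x|)%N <= tail_mass trunc_law L j.
Proof.
move=> cycle_bound j U x jL xU; have := cycle_bound j.+1 isT U x xU.
have mge : measurable [set t | j.+1%:R <= xi t].
  exact: measurable_preimageT mxi (measurable_set_ge _).
rewrite (prE _ mge) lee_fin => /le_trans; apply.
exact: pr_ge_le_tail_mass.
Qed.

End TruncatedLaw.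

Section IndependentSum.
Context d (T : measurableType d) (R : realType) (P : probability T R).
Variable xis : nat -> T -> R.
Hypotheses (mxis : forall n, measurable_fun setT (xis n))
  (indep : mutually_independent P xis).

Definition joint_event (J : seq nat) (B : nat -> set R) : set T :=
  \big[setI/setT]_(j <- J) (xis j @^-1` B j).

Definition sum_ge (I : seq nat) (m : nat) : set T :=
  [set t | m%:R <= \sum_(i <- I) xis i t].

Lemma measurable_joint_event J B :
  (forall j, measurable (B j)) -> measurable (joint_event J B).
Proof. by move=> mB; apply: bigsetI_measurable => j _; exact: measurable_preimageT. Qed.

Lemma measurable_sum_ge I m : measurable (sum_ge I m).
Proof.
apply: measurable_preimageT (measurable_set_ge _); elim: I => [|i I IH].
  by under eq_fun do rewrite big_nil; exact: measurable_cst.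
by under eq_fun do rewrite big_cons; exact: measurable_funD.
Qed.

Lemma joint_event_cons i J B C : i \notin J ->
  joint_event (i :: J) [eta B with i |-> C] = xis i @^-1` C `&` joint_event J B.
Proof.
move=> iJ; rewrite /joint_event big_cons /= eqxx; congr (_ `&` _).
by apply: eq_big_seq => j jJ /=; case: eqP => // ji; move: iJ; rewrite -ji jJ.
Qed.

Lemma pr_indep i J B C : uniq (i :: J) ->
  (forall j, measurable (B j)) -> measurable C ->
  pr P (xis i @^-1` C `&` joint_event J B) =
  pr P (xis i @^-1` C) * pr P (joint_event J B).
Proof.
rewrite cons_uniq => /andP[iJ uJ] mB mC.
have mBC j : measurable ([eta B with i |-> C] j) by rewrite /=; case: eqP.
have BE : (\prod_(j <- J) P (xis j @^-1` [eta B with i |-> C] j))%E =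
    P (joint_event J B).
  rewrite /joint_event indep //; apply: eq_big_seq => j jJ /=.
  by case: eqP => // ji; move: iJ; rewrite -ji jJ.
have := indep (I := i :: J) (B := [eta B with i |-> C]).
rewrite cons_uniq iJ uJ -/(joint_event _ _) joint_event_cons // big_cons BE.
move=> /(_ isT mBC); rewrite [[eta B with i |-> C] i]/= eqxx /pr => ->.
rewrite fineM //; apply: fin_num_measure; first exact: measurable_preimageT.
exact: measurable_joint_event.
Qed.

Variables (d0 : measure_display) (T0 : measurableType d0).
Variables (P0 : probability T0 R) (xi : T0 -> R) (L : nat).
Hypothesis same : forall n, same_distribution P (xis n) P0 xi.

Local Notation q := (trunc_law P0 xi L).

Lemma conv_tail_le_pr I : forall J B m, uniq (I ++ J) ->
  (forall j, measurable (B j)) ->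
  pr P (joint_event J B) * conv_tail q L (size I) m <=
  pr P (joint_event J B `&` sum_ge I m).
Proof.
elim: I => [|i I IH] J B m uIJ mB /=.
  have mJ : measurable (joint_event J B) := measurable_joint_event J mB.
  case: eqP => [->|_]; last by rewrite mulr0 pr_ge0.
  rewrite mulr1 le_pr //; first exact: measurableI mJ (measurable_sum_ge _ _).
  by move=> t Jt; split => //; rewrite /sum_ge /= big_nil.
have mJ : measurable (joint_event J B) := measurable_joint_event J mB.
have [iJ uJ] : i \notin J /\ uniq J.
  move: uIJ; rewrite cat_cons cons_uniq mem_cat negb_or cat_uniq.
  by case/andP => /andP[_ ->] /and3P[_ _ ->].
have mlevel k : measurable (@trunc_level R L k) := measurable_trunc_level _ _.
pose G (k : nat) := (xis i @^-1` trunc_level L k.+1 `&` joint_event J B) `&`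
  sum_ge I (m - k.+1).
have mG k : measurable (G k).
  have mCJ := measurableI _ _ (measurable_preimageT (mxis i) (mlevel k.+1)) mJ.
  exact: measurableI _ _ mCJ (measurable_sum_ge _ _).
rewrite mulr_sumr; apply: (@le_trans _ _ (\sum_(k < L) pr P (G k))).
  apply: ler_sum => k _; rewrite mulrA [_ * q _]mulrC.
  have -> : q k.+1 * pr P (joint_event J B) =
      pr P (xis i @^-1` trunc_level L k.+1 `&` joint_event J B).
    by rewrite pr_indep /= ?iJ // /trunc_law /pr (same i (mlevel _)).
  rewrite /G -joint_event_cons //; apply: IH => [|j].
    by rewrite -cat1s uniq_catCA.
  by rewrite /=; case: eqP.
rewrite -(pr_bigsetU P (Q := xpredT) (F := fun k : 'I_L => G k)); last 2 first.
- by move=> k _; exact: mG.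
- move=> k k' _ _ [t [[[tk _] _] [[tk' _] _]]]; apply/val_inj/succn_inj.
  exact: trunc_level_inj tk tk'.
apply: le_pr; first by apply: bigsetU_measurable => k _; exact: mG.
  exact: measurableI mJ (measurable_sum_ge _ _).
rewrite -bigcup_mkord; apply: bigcup_sub => k /= kL t [[it Jt] It]; split => //.
rewrite /sum_ge /= big_cons; apply: le_trans (lerD (trunc_level_ge it) It).
by rewrite -natrD ler_nat; lia.
Qed.

Lemma conv_tail_le_pr_sum I m : uniq I ->
  conv_tail q L (size I) m <= pr P (sum_ge I m).
Proof.
move=> uI; have := @conv_tail_le_pr I [::] (fun _ => setT) m.
rewrite cats0 /joint_event big_nil setTI /pr probability_setT mul1r.
by apply.
Qed.

End IndependentSum.

Theorem proposition4p7 (R : realType) (V : finType) (E : rel V) (alpha : R)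
    (d0 : measure_display) (T0 : measurableType d0) (P0 : probability T0 R)
    (xi : T0 -> R)
    (d : measure_display) (T : measurableType d) (P : probability T R)
    (xis : nat -> T -> R) :
  symmetric E -> irreflexive E ->
  measurable_fun setT xi -> (forall t, xi t \is a Num.int) ->
  cycle_length_bounded_by E alpha P0 xi ->
  (forall n, measurable_fun setT (xis n)) ->
  (forall n, same_distribution P (xis n) P0 xi) ->
  mutually_independent P xis ->
  forall (A : {set V}) (l : nat),
    ((PU E alpha [set: V] (fun s => l <= #|Or s A|)%N)%:E
      <= P [set t | (l%:R <= \sum_(1 <= i < #|A|.+1) xis i t)%R])%E.
Proof.
move=> _ _ mxi xi_int cycle_bound mxis same indep A l.
have cycle_tail := cycle_tail_le mxi xi_int (L := l.+1) cycle_bound.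
have PU_le_conv := PU_card_Or_le (trunc_law_ge0 P0 xi l.+1) (ltn0Sn l)
  cycle_tail (finset.subsetT A) (leqnSn l).
have sizeA : size (index_iota 1 #|A|.+1) = #|A| by rewrite size_iota subn1.
have := conv_tail_le_pr_sum mxis indep l.+1 same l (iota_uniq 1 (#|A|.+1 - 1)).
rewrite sizeA => conv_le_pr.
rewrite (prE _ (measurable_sum_ge mxis (index_iota 1 #|A|.+1) l)) lee_fin.
exact: le_trans PU_le_conv conv_le_pr.
Qed.
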